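(* Let $(E,q)$ be a formed space and $U\in\mathcal{P}^\omega(E)$. Then $\mathcal{P}^\omega(E)$ and $\mathcal{P}^\omega(E,U)$ are graded posets, with $\dim\mathcal{P}^\omega(E)=g(E)-1$ and $\dim\mathcal{P}^\omega(E,U)=g(E)-\dim U+\dim R(E)=g(U^\perp)$.
   Context: Formed spaces over a field $\mathbb{F}$ with involution $\sigma$ ($\bar c=\sigma(c)$), $\varepsilon$ ($\varepsilon\bar\varepsilon=1$) and additive subgroup $\Lambda$ with $\{c-\varepsilon\bar c\}\le\Lambda\le\{c:c+\varepsilon\bar c=0\}$: a form on a finite-dimensional $E$ is a sesquilinear $f$ ($f(av,bw)=\bar af(v,w)b$) modulo those with $f(v,v)\in\Lambda$, $f(w,v)=-\varepsilon\overline{f(v,w)}$. $\omega_q(v,w)=q(v,w)+\varepsilon\overline{q(w,v)}$, $Q_q(v)=q(v,v)+\Lambda$. $K(E)=\{v:\omega_q(E,v)=0\}$, $R(E)=\{v\in K(E):Q_q(v)=0\}$, $U^\perp=\{v:\omega_q(v,U)=0\}$, isotropic means $\omega_q,Q_q$ vanish on the subspace, genus $g(E)$ = max dimension of isotropic subspace minus $\dim R(E)$; $U^\perp$ carries the restricted form. $\mathcal{P}^\omega(E)$ is the poset (inclusion) of isotropic $W$ with $R(E)<W<E$, and $\mathcal{P}^\omega(E,U)$ its subposet of those with $W+U^\perp=E$. A poset is graded if all maximal chains have the same finite length; its dimension is the maximal length $d$ of a chain $a_0<\dots<a_d$. *)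

From HB Require Import structures.
From mathcomp Require Import all_boot all_order all_algebra.
From mathcomp Require Import boolp.
Set Implicit Arguments.
Unset Strict Implicit.
Unset Printing Implicit Defensive.
Import Order.TTheory GRing.Theory Num.Theory.
Local Open Scope ring_scope.

(* ---------- Formed spaces ----------
   F : field, sigma : involution (ring morphism with sigma o sigma = id),
   eps with eps * sigma eps = 1, Lam : form parameter (predicate on F),
   E : finite-dimensional F-vector space, q : E -> E -> F a sesquilinear
   form (a representative of the form class; every notion below only
   depends on omega_q and Q_q, hence on the class). *)

Definition form_parameter (F : fieldType) (sigma : F -> F) (eps : F)
    (Lam : F -> Prop) : Prop :=
  [/\ (forall c, sigma (sigma c) = c),
      eps * sigma eps = 1,
      Lam 0 /\ (forall x y, Lam x -> Lam y -> Lam (x - y)),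
      (forall c, Lam (c - eps * sigma c)) /\
      (forall c, Lam c -> c + eps * sigma c = 0)
    & (forall a c, Lam c -> Lam (sigma a * c * a))].

Definition sesquilinear (F : fieldType) (sigma : F -> F) (E : vectType F)
    (q : E -> E -> F) : Prop :=
  [/\ (forall a b v w, q (a *: v) (b *: w) = sigma a * q v w * b),
      (forall u v w, q (u + v) w = q u w + q v w)
    & (forall u v w, q u (v + w) = q u v + q u w)].

Section FormedSpaces.
Context (F : fieldType) (sigma : F -> F) (eps : F) (Lam : F -> Prop)
        (E : vectType F) (q : E -> E -> F).

Definition omega (v w : E) : F := q v w + eps * sigma (q w v).

(* Q_q(v) = 0  iff  q(v,v) \in Lam *)
Definition Qzero (v : E) : Prop := Lam (q v v).

Definition isotropic (W : {vspace E}) : Prop :=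
  forall v w, v \in W -> w \in W -> omega v w = 0 /\ Qzero v.

(* An ambient formed space is given as a set S of vectors (a subspace of E,
   e.g. E itself or U^perp) carrying the restricted form. *)
Definition Kset (S : E -> Prop) (v : E) : Prop :=
  S v /\ forall w, S w -> omega w v = 0.
Definition Rset (S : E -> Prop) (v : E) : Prop := Kset S v /\ Qzero v.

Definition dimset (P : E -> Prop) : nat :=
  \max_(i < (\dim (fullv : {vspace E})).+1 |
        `[< exists W : {vspace E}, (forall v, v \in W -> P v) /\ \dim W = i >]) i.

Definition maxiso (S : E -> Prop) : nat :=
  \max_(i < (\dim (fullv : {vspace E})).+1 |
        `[< exists W : {vspace E},
              (forall v, v \in W -> S v) /\ isotropic W /\ \dim W = i >]) i.

Definition genus (S : E -> Prop) : int :=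
  (maxiso S)%:Z - (dimset (Rset S))%:Z.

Definition allE : E -> Prop := fun _ => True.

Definition perp (U : {vspace E}) (v : E) : Prop :=
  forall u, u \in U -> omega v u = 0.

Definition Pomega (W : {vspace E}) : Prop :=
  [/\ isotropic W,
      (forall v, Rset allE v -> v \in W),
      (exists2 v, v \in W & ~ Rset allE v)
    & W != fullv].

Definition PomegaU (U W : {vspace E}) : Prop :=
  Pomega W /\ forall e : E, exists w u, [/\ w \in W, perp U u & e = w + u].

End FormedSpaces.

Section Posets.
Context (F : fieldType) (E : vectType F).

Definition ltv : rel {vspace E} := fun V W => (V <= W)%VS && (V != W).

Definition chain (P : {vspace E} -> Prop) (s : seq {vspace E}) : Prop :=
  (forall W, W \in s -> P W) /\ sorted ltv s.

Definition maximal_chain (P : {vspace E} -> Prop) (s : seq {vspace E}) : Prop :=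
  chain P s /\ forall t, chain P t -> {subset s <= t} -> {subset t <= s}.

Definition chain_length (s : seq {vspace E}) : int := (size s)%:Z - 1.

Definition graded (P : {vspace E} -> Prop) : Prop :=
  exists d : int, forall s, maximal_chain P s -> chain_length s = d.

Definition poset_dim (P : {vspace E} -> Prop) (d : int) : Prop :=
  (exists s, chain P s /\ chain_length s = d) /\
  (forall s, chain P s -> chain_length s <= d).

End Posets.

(* Call a family of subspaces an interval of dimensions (a, b] if it is closed under
   intermediate subspaces, all its members have dimension in (a, b], and from any member
   one can step down to dimension a + 1 and up to dimension b.  Such a family is graded of
   dimension b - a - 1, since any chain can be refined until consecutive members differ by
   one dimension.  P^ω(E) is such a family with a = dim R(E) and b = m, the common
   dimension of all maximal isotropic subspaces (Witt).  For isotropic W ⊇ R(E) one has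
   dim W^⊥ = dim E + dim R(E) - dim W; hence W + U^⊥ = E forces dim W ≥ dim U, while a
   complement of W ∩ U^⊥ in W, enlarged by R(E), has dimension at most dim U.  So
   P^ω(E,U) is such a family with a = dim U - 1 and b = m.  It is nonempty because an isotropic W with W ∩ U^⊥ = R(E) and
   W + U^⊥ ≠ E grows by a hyperbolic partner of a vector of U orthogonal to W.  The same
   dimension count gives R(U^⊥) = U, whence g(U^⊥) = m - dim U. *)

From Pilot Require Import Defs.
From HB Require Import structures.
From mathcomp Require Import all_boot all_order all_algebra.
From mathcomp Require Import boolp zify ring.
Set Implicit Arguments.
Unset Strict Implicit.
Unset Printing Implicit Defensive.
Import Order.TTheory GRing.Theory Num.Theory.
Local Open Scope ring_scope.

Section SubspaceChains.
Variables (F : fieldType) (E : vectType F).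
Local Notation ltv := (@ltv F E).

Lemma ltv_trans : transitive ltv.
Proof.
move=> V U W /andP [UV nUV] /andP [VW nVW]; rewrite /Defs.ltv (subv_trans UV VW).
apply: contra nUV => /eqP eUW; move: VW; rewrite -eUW => VU.
by apply/eqP/subv_anti; rewrite UV VU.
Qed.

Lemma ltv_irr : irreflexive ltv.
Proof. by move=> V; rewrite /Defs.ltv eqxx andbF. Qed.

Lemma ltv_dim V W : ltv V W -> (\dim V < \dim W)%N.
Proof. by case/andP => VW; apply: contraNT; rewrite -leqNgt eqEdim VW. Qed.

Lemma ltv_addv_line (A : {vspace E}) x : x \notin A -> ltv A (A + <[x]>)%VS.
Proof.
move=> xA; rewrite /Defs.ltv addvSl; apply: contra xA => /eqP ->.
by rewrite memvE addvSr.
Qed.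

Lemma ltv_subv_dim (V W : {vspace E}) : (V <= W)%VS -> (\dim V < \dim W)%N -> ltv V W.
Proof. by move=> VW; rewrite /Defs.ltv VW; apply: contraTneq => ->; rewrite ltnn. Qed.

Lemma dimv_add_line (A : {vspace E}) x : (\dim (A + <[x]>)%VS <= (\dim A).+1)%N.
Proof.
apply: leq_trans (dimv_add_leqif _ _).1 _.
by rewrite -addn1 leq_add2l dim_vline leq_b1.
Qed.

Lemma path_ltv_dim A s : path ltv A s -> (\dim A + size s <= \dim (last A s))%N.
Proof.
elim: s A => [|W s IHs] A /=; first by rewrite addn0.
case/andP=> /ltv_dim AW /IHs; apply: leq_trans.
by rewrite addnS ltn_add2r.
Qed.

Lemma chain_cons (P : {vspace E} -> Prop) A s :
  chain P (A :: s) <-> [/\ P A, path ltv A s & forall W, W \in s -> P W].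
Proof.
split=> [[Ps As]|[PA As Ps]]; last first.
  by split=> // W; rewrite inE => /predU1P [->|/Ps].
by split=> // [|W Ws]; apply: Ps; rewrite inE ?eqxx ?Ws ?orbT.
Qed.

Section GradedInterval.
Variables (P : {vspace E} -> Prop) (a b : nat).
Hypothesis P_dim : forall W, P W -> (a < \dim W <= b)%N.
Hypothesis P_convex : forall A B X, P A -> P B -> (A <= X)%VS -> (X <= B)%VS -> P X.
Hypothesis P_down : forall B, P B -> (a.+1 < \dim B)%N -> exists2 X, P X & ltv X B.
Hypothesis P_up : forall A, P A -> (\dim A < b)%N -> exists2 X, P X & ltv A X.
Hypothesis P_nonempty : exists X, P X.

Lemma P_between A B : P A -> P B -> ltv A B -> ((\dim A).+1 < \dim B)%N ->
  exists X, [/\ P X, ltv A X & ltv X B].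
Proof.
move=> PA PB /andP [AB nAB] dAB.
have /subvPn [x xB xA] : ~~ (B <= A)%VS.
  by apply: contra nAB => BA; apply/eqP/subv_anti; rewrite AB BA.
have AxB : (A + <[x]> <= B)%VS by rewrite subv_add AB -memvE.
exists (A + <[x]>)%VS; split; first exact: P_convex PA PB (addvSl _ _) AxB.
  exact: ltv_addv_line.
exact: ltv_subv_dim AxB (leq_ltn_trans (dimv_add_line A x) dAB).
Qed.

Lemma chain_extend_above A s : chain P (A :: s) -> (\dim A + size s < b)%N ->
  exists t, [/\ chain P (A :: t), {subset s <= t} & size t = (size s).+1].
Proof.
elim: s A => [|W s IHs] A /chain_cons [PA As Ps] hsz.
  rewrite addn0 in hsz; have [X PX AX] := P_up PA hsz.
  exists [:: X]; split=> //; apply/chain_cons; split=> //=; first by rewrite AX.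
  by move=> V /[!inE] /eqP ->.
have PW : P W by apply: Ps; rewrite inE eqxx.
have /andP [AW Ws] := As.
have [gap | nogap] := ltnP (\dim A).+1 (\dim W).
  have [X [PX AX XW]] := P_between PA PW AW gap.
  exists [:: X, W & s]; split=> //; last by move=> V Vs; rewrite inE Vs orbT.
  apply/chain_cons; split=> //=; first by rewrite AX XW.
  by move=> V /[!inE] /predU1P [->|]; last exact: Ps.
have dW : \dim W = (\dim A).+1 by apply/eqP; rewrite eqn_leq nogap ltv_dim.
have chWs : chain P (W :: s).
  by apply/chain_cons; split=> // V Vs; apply: Ps; rewrite inE Vs orbT.
have [t [cht st szt]] : exists t,
    [/\ chain P (W :: t), {subset s <= t} & size t = (size s).+1].
  by apply: IHs chWs _; rewrite dW addSnnS.
exists (W :: t); split; last by rewrite /= szt.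
- case/chain_cons: cht => _ Wt Pt; apply/chain_cons; split=> //=.
    by rewrite AW.
  by move=> V /[!inE] /predU1P [->|/Pt].
- by move=> V /[!inE] /predU1P [->|/st ->]; rewrite ?eqxx ?orbT.
Qed.

Lemma chain_extend s : chain P s -> (size s < b - a)%N ->
  exists t, [/\ chain P t, {subset s <= t} & size t = (size s).+1].
Proof.
case: s => [_ _|W s chWs hsz].
  have [X PX] := P_nonempty; exists [:: X]; split=> //.
  by apply/chain_cons; split=> // V; rewrite in_nil.
have /chain_cons [PW Ws Ps] := chWs.
have [gap | nogap] := ltnP a.+1 (\dim W).
  have [X PX XW] := P_down PW gap.
  exists [:: X, W & s]; split=> //; last by move=> V Vs; rewrite inE Vs orbT.
  apply/chain_cons; split=> //=; first by rewrite XW.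
  by move=> V /[!inE] /predU1P [->|/Ps].
have dW : \dim W = a.+1 by apply/eqP; rewrite eqn_leq nogap; case/andP: (P_dim PW).
have [t [cht st szt]] : exists t,
    [/\ chain P (W :: t), {subset s <= t} & size t = (size s).+1].
  by apply: chain_extend_above chWs _; rewrite dW /= in hsz *; lia.
exists (W :: t); split=> //; last by rewrite /= szt.
by move=> V /[!inE] /predU1P [->|/st ->]; rewrite ?eqxx ?orbT.
Qed.

Lemma chain_size_le s : chain P s -> (size s <= b - a)%N.
Proof.
case: s => [//|W s /chain_cons [PW Ws Ps]].
have /andP [aW _] := P_dim PW.
have /andP [_ lastb] : (a < \dim (last W s) <= b)%N.
  by apply: P_dim; move: (mem_last W s); rewrite inE => /predU1P [->|/Ps].
have := path_ltv_dim Ws; rewrite /=; lia.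
Qed.

Lemma maximal_chain_size s : maximal_chain P s -> size s = (b - a)%N.
Proof.
case=> chs smax; apply/eqP; rewrite eqn_leq chain_size_le //= leqNgt.
apply/negP => /(chain_extend chs) [t [cht st szt]].
have /uniq_leq_size : uniq t.
  by case: cht => _ sorted_t; exact: (sorted_uniq ltv_trans ltv_irr sorted_t).
by move=> /(_ _ (smax t cht st)); rewrite szt ltnn.
Qed.

Lemma exists_chain_size k : (k <= b - a)%N -> exists s, chain P s /\ size s = k.
Proof.
elim: k => [_|k IHk hk]; first by exists [::].
have [s [chs szs]] := IHk (ltnW hk); rewrite -szs in hk.
by have [t [cht _ szt]] := chain_extend chs hk; exists t; rewrite szt szs.
Qed.

Lemma graded_interval : graded P /\ poset_dim P ((b - a)%:Z - 1).
Proof.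
split.
  by exists ((b - a)%:Z - 1) => s /maximal_chain_size; rewrite /chain_length => ->.
split; first by have [s [chs szs]] := exists_chain_size (leqnn _);
  exists s; rewrite /chain_length szs.
by move=> s /chain_size_le; rewrite /chain_length; lia.
Qed.

End GradedInterval.
End SubspaceChains.

Lemma ex_maxn_prop (D : nat -> Prop) n :
  (exists k, D k) -> (forall k, D k -> (k <= n)%N) ->
  exists m, D m /\ forall k, D k -> (k <= m)%N.
Proof.
move=> [k Dk] Dn.
have exD : exists i, `[< D i >] by exists k; apply/asboolP.
have Dn' i : `[< D i >] -> (i <= n)%N by move/asboolP; apply: Dn.
have [m /asboolP Dm maxm] := ex_maxnP exD Dn'.
by exists m; split=> // i Di; apply/maxm/asboolP.
Qed.

Lemma bigmax_asbool_eq (D : nat -> Prop) n m : D m -> (m <= n)%N ->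
  (forall k, (k <= n)%N -> D k -> (k <= m)%N) ->
  (\max_(i < n.+1 | `[< D i >]) i)%N = m.
Proof.
move=> Dm mn maxm; apply/eqP; rewrite eqn_leq; apply/andP; split.
  by apply/bigmax_leqP => i /asboolP; apply: maxm; rewrite -ltnS.
by apply: (@leq_bigmax_cond _ _ _ (Ordinal (mn : (m < n.+1)%N))); apply/asboolP.
Qed.

Section SubspacePredicates.
Variables (F : fieldType) (E : vectType F).

Lemma exists_max_dimv (Pr : {vspace E} -> Prop) : (exists V, Pr V) ->
  exists V, Pr V /\ forall W, Pr W -> (\dim W <= \dim V)%N.
Proof.
move=> [V0 PV0].
pose D k := exists V, Pr V /\ \dim V = k.
have [|k [V [PV <-]]|m [[V [PV <-]] maxm]] := @ex_maxn_prop D (\dim (fullv : {vspace E})).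
- by exists (\dim V0), V0.
- exact/dimvS/subvf.
- by exists V; split=> // W PW; apply: maxm; exists W.
Qed.

Definition subspace_pred (P : E -> Prop) :=
  P 0 /\ forall a u v, P u -> P v -> P (a *: u + v).

Lemma subspace_predP (P : E -> Prop) : subspace_pred P ->
  exists V : {vspace E}, forall v, v \in V <-> P v.
Proof.
case=> P0 Plin.
have PD u v : P u -> P v -> P (u + v).
  by move=> Pu Pv; have := Plin 1 u v Pu Pv; rewrite scale1r.
have PZ a u : P u -> P (a *: u).
  by move=> Pu; have := Plin a u 0 Pu P0; rewrite addr0.
have [|V [VP maxV]] := @exists_max_dimv (fun V => forall v, v \in V -> P v).
  by exists 0%VS => v; rewrite memv0 => /eqP ->.
exists V => v; split=> [/VP //|Pv]; apply: contraT => vV.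
have /maxV : forall w, w \in (V + <[v]>)%VS -> P w.
  by move=> _ /memv_addP [x /VP Px [_ /vlineP [k ->] ->]]; apply/PD/PZ.
by rewrite leqNgt ltv_dim // ltv_addv_line.
Qed.

(* Junk value [0] when [P] is not the carrier of a subspace. *)
Definition vspace_of (P : E -> Prop) : {vspace E} :=
  if pselect (exists V : {vspace E}, forall v, v \in V <-> P v) is left exV
  then sval (cid exV) else 0%VS.

Lemma vspace_ofP (P : E -> Prop) v : subspace_pred P -> reflect (P v) (v \in vspace_of P).
Proof.
move=> /subspace_predP exV; apply: (iffP idP); rewrite /vspace_of.
  by case: pselect => // exV'; case: (cid exV') => V /= ->.
by case: pselect => // exV'; case: (cid exV') => V /= ->.
Qed.

Lemma dimset_eq (P : E -> Prop) (V : {vspace E}) :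
  (forall v, v \in V <-> P v) -> dimset P = \dim V.
Proof.
move=> VP; apply: (@bigmax_asbool_eq
  (fun i => exists W : {vspace E}, (forall v, v \in W -> P v) /\ \dim W = i)).
- by exists V; split=> // v /VP.
- exact/dimvS/subvf.
- by move=> _ _ [W [WP <-]]; apply/dimvS/subvP => w /WP /VP.
Qed.

End SubspacePredicates.

Section FormedSpace.
Variables (F : fieldType) (sigma : {rmorphism F -> F}) (eps : F) (Lam : F -> Prop).
Variables (E : vectType F) (q : E -> E -> F).
Hypothesis hLam : form_parameter sigma eps Lam.
Hypothesis hq : sesquilinear sigma q.

Local Notation om := (omega sigma eps q).
Local Notation Qz := (Qzero Lam q).
Local Notation iso := (isotropic sigma eps Lam q).
Local Notation n := (\dim (fullv : {vspace E})).
Local Notation allE := (@Defs.allE F E).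
Local Notation m := (maxiso sigma eps Lam q allE).
Local Notation Pw := (Pomega sigma eps Lam q).

Lemma sigmaK : involutive sigma.
Proof. by case: hLam. Qed.

Lemma eps_sigma : eps * sigma eps = 1.
Proof. by case: hLam. Qed.

Lemma Lam0 : Lam 0.
Proof. by case: hLam => _ _ []. Qed.

Lemma LamB x y : Lam x -> Lam y -> Lam (x - y).
Proof. by case: hLam => _ _ [_ LamB] _ _; apply: LamB. Qed.

Lemma LamD x y : Lam x -> Lam y -> Lam (x + y).
Proof. by move=> Lx Ly; rewrite -[y]opprK -[- y]sub0r; apply: LamB (LamB Lam0 Ly). Qed.

Lemma Lam_trace c : Lam (c - eps * sigma c).
Proof. by case: hLam => _ _ _ []. Qed.

Lemma Lam_skew c : Lam c -> c + eps * sigma c = 0.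
Proof. by case: hLam => _ _ _ [_ skew] _; apply: skew. Qed.

Lemma Lam_conj a c : Lam c -> Lam (sigma a * c * a).
Proof. by case: hLam => _ _ _ _; apply. Qed.

Lemma qZZ a b v w : q (a *: v) (b *: w) = sigma a * q v w * b.
Proof. by case: hq. Qed.

Lemma qDl u v w : q (u + v) w = q u w + q v w.
Proof. by case: hq. Qed.

Lemma qDr u v w : q u (v + w) = q u v + q u w.
Proof. by case: hq. Qed.

Lemma qZl a v w : q (a *: v) w = sigma a * q v w.
Proof. by rewrite -[w in LHS]scale1r qZZ mulr1. Qed.

Lemma qZr b v w : q v (b *: w) = q v w * b.
Proof. by rewrite -[v in LHS]scale1r qZZ rmorph1 mul1r. Qed.

Lemma omDl u v w : om (u + v) w = om u w + om v w.
Proof. by rewrite /omega qDl qDr rmorphD mulrDr addrACA. Qed.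

Lemma omDr u v w : om u (v + w) = om u v + om u w.
Proof. by rewrite /omega qDl qDr rmorphD mulrDr addrACA. Qed.

Lemma omZl a v w : om (a *: v) w = sigma a * om v w.
Proof. rewrite /omega qZl qZr rmorphM ?sigmaK; ring. Qed.

Lemma omZr b v w : om v (b *: w) = om v w * b.
Proof. rewrite /omega qZl qZr rmorphM ?sigmaK; ring. Qed.

Lemma om0l w : om 0 w = 0.
Proof. by rewrite -(scale0r 0) omZl rmorph0 mul0r. Qed.

Lemma om0r v : om v 0 = 0.
Proof. by rewrite -(scale0r 0) omZr mulr0. Qed.

Lemma om_suml I (r : seq I) (P : pred I) (f : I -> E) w :
  om (\sum_(i <- r | P i) f i) w = \sum_(i <- r | P i) om (f i) w.
Proof. exact: (big_morph _ (fun x y => omDl x y w) (om0l w)). Qed.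

Lemma om_sym v w : om w v = eps * sigma (om v w).
Proof. rewrite /omega rmorphD rmorphM sigmaK mulrDr mulrA eps_sigma; ring. Qed.

Lemma om_sym0 v w : om v w = 0 -> om w v = 0.
Proof. by move=> vw0; rewrite om_sym vw0 rmorph0 mulr0. Qed.

Lemma omQ v : Qz v -> om v v = 0.
Proof. exact: Lam_skew. Qed.

Lemma Qz0 : Qz 0.
Proof. by rewrite /Qzero -(scale0r 0) qZZ rmorph0 !mul0r; apply: Lam0. Qed.

Lemma QzZ a v : Qz v -> Qz (a *: v).
Proof. by rewrite /Qzero qZZ; apply: Lam_conj. Qed.

Lemma QzD u v : Qz u -> Qz v -> om u v = 0 -> Qz (u + v).
Proof.
rewrite /Qzero => Qu Qv /eqP; rewrite /omega addr_eq0 => /eqP quv.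
have -> : q (u + v) (u + v) = q u u + q v v + (q v u - eps * sigma (q v u)).
  by rewrite qDl !qDr quv; ring.
by apply/LamD/Lam_trace/LamD.
Qed.


(* [orthv X] is the kernel of [gram_row X], so rank-nullity bounds its codimension by
   [\dim X]. *)
Definition gram_row (X : {vspace E}) (v : E) : 'rV[F]_(\dim X) :=
  \row_i om (vbasis X)`_i v.

Fact gram_row_is_linear X : linear (gram_row X).
Proof. by move=> a u v; apply/rowP => i; rewrite !mxE omDr omZr mulrC. Qed.

HB.instance Definition _ X := GRing.isLinear.Build F E 'rV[F]_(\dim X) *:%R
  (gram_row X) (gram_row_is_linear X).

Definition orthv (X : {vspace E}) : {vspace E} :=
  vspace_of (fun v => forall x, x \in X -> om x v = 0).

Lemma orthvP (X : {vspace E}) v : reflect (forall x, x \in X -> om x v = 0) (v \in orthv X).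
Proof.
apply: vspace_ofP; split=> [x _|a u w uX wX x xX]; first exact: om0r.
by rewrite omDr omZr uX // wX // mul0r addr0.
Qed.

Lemma orthv_lker (X : {vspace E}) : orthv X = lker (linfun (gram_row X)).
Proof.
apply/vspaceP => v; rewrite memv_ker lfunE.
apply/orthvP/eqP => [Xv0 | Xv0 x /coord_vbasis ->].
  by apply/rowP => i; rewrite !mxE Xv0 // vbasis_mem ?mem_nth ?size_tuple.
rewrite om_suml big1 // => i _; rewrite omZl.
by have /rowP/(_ i) := Xv0; rewrite !mxE => ->; rewrite mulr0.
Qed.

Lemma dim_cap_orthv (S X : {vspace E}) : (\dim S <= \dim (S :&: orthv X) + \dim X)%N.
Proof.
rewrite orthv_lker -[X in (X <= _)%N](limg_ker_dim (linfun (gram_row X)) S) leq_add2l.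
by apply: leq_trans (dimvS (subvf _)) _; rewrite dimvf dim_matrix mul1r.
Qed.

Lemma orthv_line u v : (v \in orthv <[u]>) = (om u v == 0).
Proof.
apply/orthvP/eqP => [-> //|uv0 _ /vlineP [k ->]]; first exact: memv_line.
by rewrite omZl uv0 mulr0.
Qed.

Lemma orthvD A B : orthv (A + B) = (orthv A :&: orthv B)%VS.
Proof.
apply/vspaceP => v; rewrite memv_cap; apply/orthvP/andP => [ABv|[/orthvP Av /orthvP Bv]].
  by split; apply/orthvP => x x_in; apply: ABv;
    [apply: (subvP (addvSl A B)) | apply: (subvP (addvSr A B))].
by move=> _ /memv_addP [a aA [b bB ->]]; rewrite omDl Av ?Bv ?addr0.
Qed.

Definition kerv : {vspace E} := orthv fullv.

Lemma kervP v : reflect (forall w, om w v = 0) (v \in kerv).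
Proof. by apply: (iffP (orthvP _ _)) => [Kv w | Kv w _]; rewrite ?Kv ?memvf. Qed.

Lemma orthv_subker A : (A <= kerv)%VS -> orthv A = fullv.
Proof.
move=> /subvP AK; apply/vspaceP => v; rewrite memvf; apply/orthvP => x /AK /kervP Kx.
exact/om_sym0/Kx.
Qed.

Lemma dim_cap_orthv_ker (S X : {vspace E}) :
  (\dim S + \dim (X :&: kerv) <= \dim (S :&: orthv X) + \dim X)%N.
Proof.
have -> : orthv X = orthv (X :\: kerv).
  by rewrite -{1}(addv_diff_cap X kerv) orthvD (orthv_subker (capvSr X kerv)) capvf.
have := dim_cap_orthv S (X :\: kerv); have := dimv_cap_compl X kerv; lia.
Qed.

Lemma dim_orthv (X : {vspace E}) : (\dim (orthv X) + \dim X = n + \dim (X :&: kerv))%N.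
Proof.
have := dim_cap_orthv_ker fullv X; rewrite capfv => le_nX.
pose C := (X :\: kerv)%VS; pose D := ((orthv X)^C)%VS.
(* For the reverse inequality apply [dim_cap_orthv] to [C] and a complement [D] of
   [orthv X]: [C] meets [orthv D] only inside [kerv], i.e. trivially. *)
have CDK : (C :&: orthv D <= C :&: kerv)%VS.
  apply/subvP => z /memv_capP [zC /orthvP zD]; rewrite memv_cap zC; apply/kervP => w.
  have := memvf w; rewrite -(addv_complf (orthv X)).
  case/memv_addP => t /orthvP tX [d dD ->]; rewrite omDl (zD d dD) addr0.
  by apply/om_sym0/tX; apply: (subvP (diffvSl X kerv)).
have := dimvS CDK; rewrite capv_diff dimv0 leqn0 => /eqP CD0.
have := dim_cap_orthv C D; rewrite CD0 dimv_compl.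
have := dimv_cap_compl X kerv; rewrite -/C; have := dimvS (subvf (orthv X)); lia.
Qed.

Definition radv : {vspace E} := vspace_of (fun v => v \in kerv /\ Qz v).

Lemma radvP v : reflect (v \in kerv /\ Qz v) (v \in radv).
Proof.
apply: vspace_ofP; split=> [|a u w [uK Qu] [wK Qw]].
  by rewrite mem0v; split=> //; apply: Qz0.
split; first by rewrite memvD ?memvZ.
by apply: QzD => //; [apply: QzZ | move/kervP: wK; apply].
Qed.

Lemma iso_radv : iso radv.
Proof.
by move=> u v /radvP [uK Qu] /radvP [/kervP vK _]; split.
Qed.

Lemma capv_iso_kerv X : iso X -> (radv <= X)%VS -> (X :&: kerv)%VS = radv.
Proof.
move=> isoX RX; apply/vspaceP => v; rewrite memv_cap.
apply/andP/idP => [[vX vK]|vR]; last by rewrite (subvP RX) //; case/radvP: vR.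
by apply/radvP; split=> //; case: (isoX v v vX vX).
Qed.

Lemma dim_orthv_iso X : iso X -> (radv <= X)%VS ->
  (\dim (orthv X) + \dim X = n + \dim radv)%N.
Proof. by move=> isoX RX; rewrite dim_orthv capv_iso_kerv. Qed.

Lemma iso_sub A B : iso B -> (A <= B)%VS -> iso A.
Proof. by move=> isoB /subvP AB v w /AB vB /AB wB; apply: isoB. Qed.

Lemma iso_addv_line A v : iso A -> Qz v -> v \in orthv A -> iso (A + <[v]>)%VS.
Proof.
move=> isoA Qv /orthvP Av x y.
move=> /memv_addP [a aA [_ /vlineP [k ->] ->]] /memv_addP [b bA [_ /vlineP [l ->] ->]].
have [ab0 Qa] := isoA a b aA bA; split.
  rewrite !omDl !omDr !omZl !omZr ab0 omQ // Av // (om_sym0 (Av b bA)).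
  by rewrite !(mulr0, mul0r, addr0).
by apply: QzD => //; [apply: QzZ | rewrite omZr Av // mul0r].
Qed.

Lemma ltn_dim_orthv A B : iso B -> (radv <= A)%VS -> ltv A B ->
  (\dim (orthv B) < \dim (orthv A))%N.
Proof.
move=> isoB RA AB; have /andP [AsB _] := AB.
have := dim_orthv_iso (iso_sub isoB AsB) RA.
have := dim_orthv_iso isoB (subv_trans RA AsB).
have := ltv_dim AB; lia.
Qed.

Definition iso_maximal (W : {vspace E}) :=
  iso W /\ forall v, v \in orthv W -> Qz v -> v \in W.

(* Witt's argument: with C a complement of Y := W ∩ M^⊥ in W, maximality of W puts
   M ∩ C^⊥ inside Y, so dim M <= dim Y + dim C = dim W. *)
Lemma dim_iso_le_maximal W M : iso_maximal W -> iso M -> (\dim M <= \dim W)%N.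
Proof.
move=> [isoW maxW] isoM.
pose Y := (W :&: orthv M)%VS; pose C := (W :\: Y)%VS.
have MC_Y : (M :&: orthv C <= Y)%VS.
  apply/subvP => m /memv_capP [mM /orthvP mC].
  have Qm : Qz m by case: (isoM m m mM mM).
  have mW : m \in W.
    apply: maxW Qm; apply/orthvP => w; rewrite -(addv_diff_cap W Y).
    case/memv_addP => c cC [y /memv_capP [_ /memv_capP [_ /orthvP yM]] ->].
    by rewrite omDl mC // (om_sym0 (yM m mM)) addr0.
  by rewrite memv_cap mW; apply/orthvP => x xM; case: (isoM x m xM mM).
have := dim_cap_orthv M C; have := dimvS MC_Y; have := dimv_cap_compl W Y.
rewrite -/C (capv_idPr (capvSl W (orthv M))) -/Y; lia.
Qed.

Lemma iso_extend_maximal A : iso A -> exists2 M, iso_maximal M & (A <= M)%VS.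
Proof.
move=> isoA.
have [|M [[isoM AM] maxM]] := @exists_max_dimv _ _ (fun M => iso M /\ (A <= M)%VS).
  by exists A; split.
exists M => //; split=> // v vM Qv; apply: contraT => vNM.
have /maxM : iso (M + <[v]>)%VS /\ (A <= M + <[v]>)%VS.
  by split; [apply: iso_addv_line | apply: subv_trans AM (addvSl _ _)].
by rewrite leqNgt ltv_dim // ltv_addv_line.
Qed.

Lemma maxiso_eq (S : E -> Prop) (W : {vspace E}) : (forall v, v \in W -> S v) -> iso W ->
  (forall M : {vspace E}, (forall v, v \in M -> S v) -> iso M -> (\dim M <= \dim W)%N) ->
  maxiso sigma eps Lam q S = \dim W.
Proof.
move=> WS isoW maxW; apply: (@bigmax_asbool_eq (fun i => exists M : {vspace E},
  (forall v, v \in M -> S v) /\ iso M /\ \dim M = i)); first by exists W.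
  exact/dimvS/subvf.
by move=> _ _ [M [MS [isoM <-]]]; apply: maxW.
Qed.

Lemma dim_iso_maximal W : iso_maximal W -> \dim W = m.
Proof.
move=> maxW; symmetry; apply: maxiso_eq => //; first by case: maxW.
by move=> M _; apply: dim_iso_le_maximal.
Qed.

Lemma dim_iso_le_maxiso M : iso M -> (\dim M <= m)%N.
Proof.
by case/iso_extend_maximal => W maxW /dimvS; rewrite (dim_iso_maximal maxW).
Qed.

Lemma mem_radv_Rset v : v \in radv <-> Rset sigma eps Lam q allE v.
Proof.
split=> [/radvP [/kervP Kv Qv]|[[_ Kv] Qv]]; [|apply/radvP]; split=> //.
by apply/kervP => w; apply: Kv.
Qed.

Lemma PomegaE W : Pw W <-> [/\ iso W, (radv <= W)%VS & ~~ (W <= radv)%VS].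
Proof.
split=> [[isoW RW [v vW vR] _]|[isoW RW /subvPn [v vW vR]]].
  split=> //; first by apply/subvP => x /mem_radv_Rset /RW.
  by apply/subvPn; exists v => //; apply/negP => /mem_radv_Rset.
split=> //; first by move=> x /mem_radv_Rset /(subvP RW).
  by exists v => // /mem_radv_Rset; apply/negP.
apply: contraNneq vR => WF; apply/radvP; split; last by case: (isoW v v vW vW).
by apply/kervP => w; case: (isoW w v); rewrite ?WF ?memvf.
Qed.

Lemma Pomega_dim W : Pw W -> (\dim radv < \dim W <= m)%N.
Proof.
case/PomegaE => isoW RW WR; rewrite dim_iso_le_maxiso // andbT.
by apply: ltv_dim; rewrite /Defs.ltv RW; apply: contraNneq WR => <-.
Qed.

Lemma Pomega_convex A B X : Pw A -> Pw B -> (A <= X)%VS -> (X <= B)%VS -> Pw X.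
Proof.
move=> /PomegaE [_ RA AR] /PomegaE [isoB _ _] AX XB; apply/PomegaE; split.
- exact: iso_sub isoB XB.
- exact: subv_trans RA AX.
- by apply: contra AR; apply: subv_trans AX.
Qed.

Lemma Pomega_down B : Pw B -> ((\dim radv).+1 < \dim B)%N -> exists2 X, Pw X & ltv X B.
Proof.
move=> /PomegaE [isoB RB /subvPn [x xB xR]] dimB.
have RxB : (radv + <[x]> <= B)%VS by rewrite subv_add RB -memvE.
exists (radv + <[x]>)%VS.
  apply/PomegaE; split; [exact: iso_sub isoB RxB | exact: addvSl |].
  by apply/subvPn; exists x => //; rewrite memvE addvSr.
exact: ltv_subv_dim RxB (leq_ltn_trans (dimv_add_line radv x) dimB).
Qed.

Lemma Pomega_up A : Pw A -> (\dim A < m)%N -> exists2 X, Pw X & ltv A X.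
Proof.
move=> /PomegaE [isoA RA AR] dimA.
have [M maxM AM] := iso_extend_maximal isoA.
have /subvPn [x xM xA] : ~~ (M <= A)%VS.
  by apply: contraTN dimA => /dimvS; rewrite -(dim_iso_maximal maxM) -leqNgt.
have AxM : (A + <[x]> <= M)%VS by rewrite subv_add AM -memvE.
exists (A + <[x]>)%VS; last exact: ltv_addv_line.
apply/PomegaE; split; first exact: iso_sub maxM.1 AxM.
  exact: subv_trans RA (addvSl _ _).
by apply: contra AR; apply: subv_trans (addvSl _ _).
Qed.

Lemma Pomega_graded : (exists W, Pw W) ->
  graded Pw /\ poset_dim Pw ((m - \dim radv)%:Z - 1).
Proof.
exact: graded_interval Pomega_dim Pomega_convex Pomega_down Pomega_up.
Qed.

(* The intended [c] is [sigma eps * q h h]; stating it through [q h h = eps * c] keeps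
   the final computation a ring identity. *)
Lemma Qz_partner u h c : Qz u -> om u h = 1 -> q h h = eps * c -> Qz (h - c *: u).
Proof.
rewrite /Qzero => Qu uh1 qhh.
have qhu : q h u = eps - eps * sigma (q u h).
  have := congr1 (fun x => eps * sigma x) uh1.
  rewrite /omega rmorphD rmorphM sigmaK rmorph1 mulr1 mulrDr mulrA eps_sigma mul1r.
  by move=> e; apply/eqP; rewrite eq_sym subr_eq addrC e.
have -> : q (h - c *: u) (h - c *: u) =
    (- sigma c * q u h - eps * sigma (- sigma c * q u h)) + sigma c * q u u * c.
  rewrite -scaleNr qDl !qDr qZZ qZl qZr qhu qhh rmorphM !rmorphN sigmaK; ring.
by apply: LamD; [apply: Lam_trace | apply: Lam_conj].
Qed.

Lemma iso_partner W u : iso W -> (radv <= W)%VS -> u \in orthv W -> Qz u -> u \notin W ->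
  exists h, [/\ h \in orthv W, om u h = 1 & Qz h].
Proof.
move=> isoW RW uW Qu uNW; have isoWu := iso_addv_line isoW Qu uW.
have /subvPn [h1 h1W h1Wu] : ~~ (orthv W <= orthv (W + <[u]>))%VS.
  apply: contraTN (ltn_dim_orthv isoWu RW (ltv_addv_line uNW)) => /dimvS.
  by rewrite -leqNgt.
have uh1 : om u h1 != 0.
  by apply: contra h1Wu; rewrite orthvD memv_cap h1W orthv_line.
pose h2 := (om u h1)^-1 *: h1.
have uh2 : om u h2 = 1 by rewrite omZr mulfV.
exists (h2 - (sigma eps * q h2 h2) *: u); split.
- by rewrite memvB ?memvZ.
- by rewrite -scaleNr omDr uh2 omZr omQ // mul0r addr0.
- by apply: Qz_partner => //; rewrite mulrA eps_sigma mul1r.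
Qed.

Section Transversal.
Variable U : {vspace E}.
Hypothesis PwU0 : Pw U.

Local Notation PwU := (PomegaU sigma eps Lam q U).

Lemma perpE v : perp sigma eps q U v <-> v \in orthv U.
Proof. by split=> [Uv|/orthvP Uv u uU]; [apply/orthvP => u uU|]; apply/om_sym0/Uv. Qed.

Lemma orthv_U : (U <= orthv U)%VS.
Proof.
case/PomegaE: PwU0 => isoU _ _; apply/subvP => u uU.
by apply/orthvP => x xU; case: (isoU x u).
Qed.

Lemma dim_orthv_U : (\dim (orthv U) + \dim U = n + \dim radv)%N.
Proof. by case/PomegaE: PwU0 => isoU RU _; apply: dim_orthv_iso. Qed.

Lemma PomegaUE W : PwU W <-> Pw W /\ (fullv <= W + orthv U)%VS.
Proof.
split=> [[PW WU]|[PW /subvP WU]]; split=> //.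
  by apply/subvP => e _; have [w [u [wW /perpE uU ->]]] := WU e; apply: memv_add.
by move=> e; case/memv_addP: (WU e (memvf e)) => w wW [u /perpE uU ->]; exists w, u.
Qed.

Lemma dim_transversal W : (radv <= W)%VS -> (fullv <= W + orthv U)%VS ->
  (\dim U <= \dim W)%N.
Proof.
case/PomegaE: PwU0 => _ RU _ RW WUf.
have RWU : (radv <= W :&: orthv U)%VS by rewrite subv_cap RW (subv_trans RU orthv_U).
have := dimv_sum_cap W (orthv U); have := dimvS WUf; have := dimvS RWU.
have := dimvS (subvf (W + orthv U)); have := dim_orthv_U; lia.
Qed.

Lemma PomegaU_dim W : PwU W -> ((\dim U).-1 < \dim W <= m)%N.
Proof.
case/PomegaUE => PW WUf; have /andP [RW_lt ->] := Pomega_dim PW.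
case/PomegaE: PW => _ RW _; have := dim_transversal RW WUf; rewrite andbT; lia.
Qed.

Lemma PomegaU_convex A B X : PwU A -> PwU B -> (A <= X)%VS -> (X <= B)%VS -> PwU X.
Proof.
move=> /PomegaUE [PA AUf] /PomegaUE [PB _] AX XB; apply/PomegaUE.
by split; [apply: Pomega_convex PA PB AX XB | apply: subv_trans AUf (addvS AX (subvv _))].
Qed.

Lemma PomegaU_up A : PwU A -> (\dim A < m)%N -> exists2 X, PwU X & ltv A X.
Proof.
move=> /PomegaUE [PA AUf] /(Pomega_up PA) [X PX AX]; exists X => //; apply/PomegaUE.
by split=> //; apply: subv_trans AUf (addvS _ (subvv _)); case/andP: AX.
Qed.

Lemma PomegaU_intro W : iso W -> (radv <= W)%VS -> (fullv <= W + orthv U)%VS -> PwU W.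
Proof.
move=> isoW RW WUf; apply/PomegaUE; split=> //; apply/PomegaE; split=> //.
apply: contraTN (dim_transversal RW WUf) => /dimvS WR; rewrite -ltnNge.
by have /andP [RU _] := Pomega_dim PwU0; apply: leq_ltn_trans WR RU.
Qed.

Lemma PomegaU_down B : PwU B -> ((\dim U).-1.+1 < \dim B)%N -> exists2 X, PwU X & ltv X B.
Proof.
move=> /PomegaUE [PB BUf] dimB; case/PomegaE: (PB) => isoB RB _.
pose X := (B :\: orthv U + radv)%VS.
have XB : (X <= B)%VS by rewrite subv_add diffvSl RB.
have XUf : (fullv <= X + orthv U)%VS.
  apply: subv_trans BUf _; rewrite -{1}(addv_diff_cap B (orthv U)) !subv_add addvSr.
  rewrite (subv_trans (capvSr _ _) (addvSr _ _)) !andbT.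
  exact: subv_trans (addvSl _ radv) (addvSl _ _).
exists X; first exact: PomegaU_intro (iso_sub isoB XB) (addvSr _ _) XUf.
apply: ltv_subv_dim XB _; have := dim_transversal (addvSr _ _) XUf.
have := dimv_sum_cap B (orthv U); have := dimvS (subvf (B + orthv U)); have := dimvS BUf.
have := dimv_cap_compl B (orthv U); have := (dimv_add_leqif (B :\: orthv U) radv).1.
have := dim_orthv_U; rewrite -/X; lia.
Qed.

Definition transversal_iso W := [/\ iso W, (radv <= W)%VS & (W :&: orthv U <= radv)%VS].

(* Take u in U, orthogonal to W, outside R(E), and a partner h orthogonal to W with
   om u h = 1; then W + <[h]> still meets U^⊥ only in R(E). *)
Lemma transversal_iso_grow W : transversal_iso W -> ~~ (fullv <= W + orthv U)%VS ->
  exists W', transversal_iso W' /\ (\dim W < \dim W')%N.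
Proof.
case=> isoW RW WUR WUnf; case/PomegaE: PwU0 => isoU RU _.
have dimWU : (\dim W < \dim U)%N.
  have := dimv_sum_cap W (orthv U); have := dim_orthv_U.
  have : (\dim (W :&: orthv U) <= \dim radv)%N := dimvS WUR.
  have : (\dim (W + orthv U) < n)%N.
    by apply: ltv_dim; rewrite /Defs.ltv subvf; apply: contraNneq WUnf => ->.
  lia.
have /subvPn [u /memv_capP [uU uW] uR] : ~~ (U :&: orthv W <= radv)%VS.
  apply: contraTN dimWU => /dimvS; rewrite -leqNgt.
  by have := dim_cap_orthv_ker U W; rewrite capv_iso_kerv //; lia.
have Qu : Qz u by case: (isoU u u uU uU).
have uNW : u \notin W.
  by apply: contra uR => uW'; apply: (subvP WUR); rewrite memv_cap uW' (subvP orthv_U).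
have [h [hW uh1 Qh]] := iso_partner isoW RW uW Qu uNW.
have hNW : h \notin W.
  apply/negP => hW'; move: uh1; rewrite (om_sym0 (orthvP _ _ uW h hW')) => /eqP.
  by rewrite eq_sym oner_eq0.
exists (W + <[h]>)%VS; split; last exact/ltv_dim/ltv_addv_line.
split; [exact: iso_addv_line | exact: subv_trans RW (addvSl _ _) |].
apply/subvP => x /memv_capP [/memv_addP [w wW [_ /vlineP [k ->] ->]] /orthvP xU].
have k0 : k = 0.
  by have := xU u uU; rewrite omDr omZr uh1 mul1r (om_sym0 (orthvP _ _ uW w wW)) add0r.
move: xU; rewrite k0 scale0r addr0 => wU; apply: (subvP WUR).
by rewrite memv_cap wW; apply/orthvP.
Qed.

Lemma PomegaU_nonempty : exists W, PwU W.
Proof.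
have [|W [trW maxW]] := @exists_max_dimv _ _ transversal_iso.
  by exists radv; split; [exact: iso_radv | exact: subvv | exact: capvSl].
case: (trW) => isoW RW _; exists W; apply: PomegaU_intro => //.
apply: contraT => WUnf; have [W' [trW' dimW']] := transversal_iso_grow trW WUnf.
by have := maxW W' trW'; rewrite leqNgt dimW'.
Qed.

Lemma PomegaU_graded : graded PwU /\ poset_dim PwU ((m - (\dim U).-1)%:Z - 1).
Proof.
exact: graded_interval PomegaU_dim PomegaU_convex PomegaU_down PomegaU_up PomegaU_nonempty.
Qed.

Lemma maxiso_perp : maxiso sigma eps Lam q (perp sigma eps q U) = m.
Proof.
case/PomegaE: PwU0 => isoU _ _; have [M maxM UM] := iso_extend_maximal isoU.
rewrite -(dim_iso_maximal maxM); apply: maxiso_eq.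
- by move=> v vM u uU; case: (maxM.1 v u vM (subvP UM u uU)).
- by case: maxM.
- by move=> M' _; apply: dim_iso_le_maximal.
Qed.

Lemma dimset_Rset_perp : dimset (Rset sigma eps Lam q (perp sigma eps q U)) = \dim U.
Proof.
case/PomegaE: PwU0 => isoU RU _; apply: dimset_eq => v; split.
  move=> vU; split; last by case: (isoU v v vU vU).
  by split=> [u uU|w]; [case: (isoU v u vU uU) | apply].
move=> [[/perpE vU vUU] Qv]; apply: contraT => vNU.
have := ltn_dim_orthv (iso_addv_line isoU Qv vU) RU (ltv_addv_line vNU).
rewrite ltnNge dimvS //; apply/subvP => w wU; rewrite orthvD memv_cap wU orthv_line.
by apply/eqP/om_sym0/vUU/perpE.
Qed.

End Transversal.
End FormedSpace.

Theorem lemma4p4 (F : fieldType) (sigma : {rmorphism F -> F}) (eps : F)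
    (Lam : F -> Prop) (E : vectType F) (q : E -> E -> F)
    (hLam : form_parameter sigma eps Lam)
    (hq : sesquilinear sigma q)
    (U : {vspace E}) (hU : Pomega sigma eps Lam q U) :
  let gE := genus sigma eps Lam q (allE (E := E)) in
  let dimR := (dimset (Rset sigma eps Lam q (allE (E := E))))%:Z in
  [/\ graded (Pomega sigma eps Lam q),
      poset_dim (Pomega sigma eps Lam q) (gE - 1),
      graded (PomegaU sigma eps Lam q U),
      poset_dim (PomegaU sigma eps Lam q U) (gE - (\dim U)%:Z + dimR)
    & gE - (\dim U)%:Z + dimR = genus sigma eps Lam q (perp sigma eps q U)].
Proof.
move=> gE dimR.
have [Pw_graded Pw_dim] := Pomega_graded hLam hq (ex_intro _ U hU).
have [PwU_graded PwU_dim] := PomegaU_graded hLam hq hU.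
have /andP [RU Um] := Pomega_dim hLam hq hU.
have dimRE := dimset_eq (mem_radv_Rset hLam hq).
rewrite /gE /dimR /genus (maxiso_perp hLam hq hU) (dimset_Rset_perp hLam hq hU) dimRE.
split=> //.
- by move: Pw_dim; congr poset_dim; lia.
- by move: PwU_dim; congr poset_dim; lia.
- lia.
Qed.
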